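(* Let $H$ be an $r$-uniform hypergraph on $n$ vertices with average degree $d$. Let $s(H)$ be defined by $$\mathrm{bw}(H)=\frac{nd}{r}\left(1-2^{1-r}\right)-s(H).$$ Then $\mathrm{disc}^{+}(H)\geq \frac{s(H)}{2}$.
   Context: An equipartition of a finite set is a partition into two parts whose sizes differ by at most one. A bisection of $H$ is an equipartition $V(H)=X\cup Y$ together with all edges containing at least one vertex in each part; its size is the number of such edges, and $\mathrm{bw}(H)$ is the minimum size of a bisection. The average degree is $d=r|E(H)|/n$. With edge density $p=|E(H)|/\binom{n}{r}$, for $U\subset V(H)$ let $e(U)$ be the number of edges contained in $U$ and $\mathrm{disc}(U)=e(U)-p\binom{|U|}{r}$; the positive discrepancy is $\mathrm{disc}^{+}(H)=\max_{U\subset V(H)}\mathrm{disc}(U)$. *)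

From HB Require Import structures.
From mathcomp Require Import all_boot all_order all_algebra.
Set Implicit Arguments. Unset Strict Implicit. Unset Printing Implicit Defensive.
Import Order.TTheory GRing.Theory Num.Theory.
Local Open Scope ring_scope.

Definition uniform (T : finType) (r : nat) (E : {set {set T}}) : Prop :=
  forall e, e \in E -> #|e| = r.

Definition equipartition (T : finType) (X : {set T}) : bool :=
  (#|X| <= #|~: X|.+1)%N && (#|~: X| <= #|X|.+1)%N.

Definition cut_size (T : finType) (E : {set {set T}}) (X : {set T}) : nat :=
  #|[set e in E | (e :&: X != set0) && (e :&: ~: X != set0)]|.

(* bisection width: minimum bisection size (cut sizes are <= #|E|) *)
Definition bw (T : finType) (E : {set {set T}}) : nat :=
  \big[minn/#|E|]_(X : {set T} | equipartition X) cut_size E X.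

Definition e_in (T : finType) (E : {set {set T}}) (U : {set T}) : nat :=
  #|[set e in E | e \subset U]|.

Definition density (R : realFieldType) (T : finType) (r : nat)
  (E : {set {set T}}) : R := #|E|%:R / ('C(#|T|, r))%:R.

Definition disc (R : realFieldType) (T : finType) (r : nat)
  (E : {set {set T}}) (U : {set T}) : R :=
  (e_in E U)%:R - density R r E * ('C(#|U|, r))%:R.

Definition disc_plus (R : realFieldType) (T : finType) (r : nat)
  (E : {set {set T}}) : R :=
  \big[Num.max/disc R r E set0]_(U : {set T}) disc R r E U.

Definition avg_deg (R : realFieldType) (T : finType) (r : nat)
  (E : {set {set T}}) : R := (r * #|E|)%:R / (#|T|)%:R.

Definition s_H (R : realFieldType) (T : finType) (r : nat)
  (E : {set {set T}}) : R :=
  (#|T|)%:R * avg_deg R r E / r%:R * (1 - (2 : R) ^ (1 - r%:Z)) - (bw E)%:R.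

From mathcomp Require Import all_boot all_order all_algebra.
From mathcomp Require Import zify lra.
Import Order.TTheory GRing.Theory Num.Theory.

Set Implicit Arguments.
Unset Strict Implicit.
Unset Printing Implicit Defensive.

(* Every edge missed by a bisection (X, ~: X) lies inside X or inside ~: X, so
   #|E| <= cut + e(X) + e(~: X).  Writing e(U) = disc U + p 'C(#|U|, r) and
   using 2^(r-1) ('C(a, r) + 'C(b, r)) <= 'C(a + b, r) for |a - b| <= 1, the two
   inside terms are at most 2 disc^+ + p 'C(n, r) 2^(1-r) = 2 disc^+ + #|E| 2^(1-r).
   Hence every bisection has size at least #|E| (1 - 2^(1-r)) - 2 disc^+. *)

Lemma leq_bin_balanced (a b k : nat) : (a <= b.+1)%N -> (b <= a.+1)%N ->
  (2 ^ k * ('C(a, k.+1) + 'C(b, k.+1)) <= 'C(a + b, k.+1))%N.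
Proof.
move=> hab hba; elim: k => [|k IHk]; first by rewrite expn0 mul1n !bin1.
rewrite -(leq_pmul2l (ltn0Sn k.+1)) mulnCA mulnDr !mul_bin_left expnS -mulnA.
set u := (a - k.+1)%N; set v := (b - k.+1)%N; set w := (a + b - k.+1)%N.
have hu : (2 * u <= w)%N by rewrite /u /w; lia.
have hv : (2 * v <= w)%N by rewrite /v /w; lia.
apply: (@leq_trans (2 ^ k * (w * 'C(a, k.+1) + w * 'C(b, k.+1)))).
  rewrite mulnCA leq_mul2l mulnDr !mulnA; apply/orP; right.
  by apply: leq_add; rewrite leq_mul2r ?hu ?hv ?orbT.
by rewrite -mulnDr mulnCA leq_mul2l IHk orbT.
Qed.

Local Open Scope ring_scope.

Section Bisection.

Variables (T : finType) (E : {set {set T}}).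

Lemma card_le_cut_size_e_in (X : {set T}) :
  (#|E| <= cut_size E X + e_in E X + e_in E (~: X))%N.
Proof.
rewrite /cut_size /e_in.
apply: leq_trans (leq_add (leq_card_setU _ _) (leqnn _)).
apply: leq_trans (leq_card_setU _ _).
apply: subset_leq_card; apply/subsetP => e Ee; rewrite !inE Ee /=.
have [eX0|eX] := eqVneq (e :&: X) set0.
  by rewrite -disjoints_subset -setI_eq0 eX0 eqxx !orbT.
have [eCX0|//] := eqVneq (e :&: ~: X) set0.
by rewrite -(setCK X) -disjoints_subset setCK -setI_eq0 eCX0 eqxx orbT.
Qed.

Variables (R : realFieldType) (r : nat).

Lemma disc_plus_ge0 : 0 <= disc_plus R r E.
Proof.
apply: le_trans (le_bigmax _ _ [set: T]); rewrite /disc /e_in.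
have -> : [set e in E | e \subset [set: T]] = E.
  by apply/setP => e; rewrite !inE subsetT andbT.
rewrite /density cardsT.
have [->|Cpos] := posnP 'C(#|T|, r); first by rewrite invr0 !mulr0 subr0.
by rewrite mulfVK ?subrr // pnatr_eq0 -lt0n.
Qed.

Lemma e_in_le_disc_plus (U : {set T}) :
  (e_in E U)%:R <= disc_plus R r E + density R r E * 'C(#|U|, r)%:R.
Proof. by rewrite -lerBlDr; apply: le_bigmax. Qed.

End Bisection.

Section BisectionWidth.

Variables (R : realFieldType) (T : finType) (E : {set {set T}}) (k : nat).

Lemma density_bin_equipartition (X : {set T}) : equipartition X ->
  density R k.+1 E * ('C(#|X|, k.+1) + 'C(#|~: X|, k.+1))%:R <=
    #|E|%:R / 2 ^+ k.
Proof.
case/andP=> hX hCX; have := leq_bin_balanced k hX hCX.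
rewrite cardsC -(ler_nat R) natrM natrX /density => hbin.
have [->|Cpos] := posnP 'C(#|T|, k.+1).
  by rewrite invr0 mulr0 mul0r divr_ge0 ?exprn_ge0 ?ler0n.
rewrite -mulrA ler_wpM2l // mulrC ler_pdivrMr ?ltr0n //.
by rewrite mulrC ler_pdivlMr ?exprn_gt0 // mulrC.
Qed.

Lemma cut_size_ge (X : {set T}) : equipartition X ->
  #|E|%:R * (1 - (2 ^+ k)^-1) - 2 * disc_plus R k.+1 E <= (cut_size E X)%:R.
Proof.
move=> eqX; have := density_bin_equipartition eqX.
have := e_in_le_disc_plus E R k.+1 X; have := e_in_le_disc_plus E R k.+1 (~: X).
have := card_le_cut_size_e_in E X; rewrite -(ler_nat R) !natrD.
rewrite mulrDr mulrBr mulr1; lra.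
Qed.

Lemma bw_ge :
  #|E|%:R * (1 - (2 ^+ k)^-1) - 2 * disc_plus R k.+1 E <= (bw E)%:R.
Proof.
apply: (big_ind (fun x : nat => _ <= x%:R)); last exact: cut_size_ge.
- have := disc_plus_ge0 E R k.+1.
  have : 0 <= #|E|%:R * (2 ^+ k)^-1 :> R by rewrite divr_ge0 ?exprn_ge0 ?ler0n.
  rewrite mulrBr mulr1; lra.
- by move=> x y; rewrite /minn; case: ifP.
Qed.

Lemma s_HE : (0 < #|T|)%N ->
  s_H R k.+1 E = #|E|%:R * (1 - (2 ^+ k)^-1) - (bw E)%:R.
Proof.
move=> Tpos; rewrite /s_H /avg_deg natrM mulrCA mulfV ?pnatr_eq0 -?lt0n //.
rewrite mulr1 [_ * #|E|%:R]mulrC mulfK ?pnatr_eq0 //.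
by congr (_ * (1 - _) - _); rewrite exprnN; congr (_ ^ _); lia.
Qed.

End BisectionWidth.

Theorem lemma1p4 (R : realFieldType) (T : finType) (r : nat)
  (E : {set {set T}}) :
  uniform r E ->
  s_H R r E / 2 <= disc_plus R r E.
Proof.
move=> _; rewrite ler_pdivrMr ?ltr0n // mulrC.
have D0 := disc_plus_ge0 E R r.
(* For r = 0 or n = 0 the main term n d / r of s_H is 0 (as x / 0 = 0). *)
have s_H_degenerate : s_H R r E = - (bw E)%:R -> s_H R r E <= 2 * disc_plus R r E.
  by move=> ->; apply: le_trans (mulr_ge0 _ D0); rewrite ?oppr_le0.
case: r D0 s_H_degenerate => [|k] D0 s_H_degenerate.
  by apply: s_H_degenerate; rewrite /s_H invr0 mulr0 mul0r sub0r.
have [T0|Tpos] := posnP #|T|.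
  by apply: s_H_degenerate; rewrite /s_H T0 !mul0r sub0r.
rewrite s_HE //; have := bw_ge R E k; lra.
Qed.
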